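(* Consider $n$ users forming a clique with uniform weights, i.e., $\phi(x_i;x_{-i})=\frac1n\sum_{j=1}^n x_j$ for every $i$. Then for any dimension $\ell$, any features $x_1,\dots,x_n\in\mathbb{R}^\ell$, and any linear classifier $h(x_i;x_{-i})=\mathrm{sign}(\theta^\top\phi(x_i;x_{-i})+b)$, under the myopic best-response dynamics described below either (i) all $n$ users move in the first round, or (ii) none of the users move at all.
   Context: $\mathrm{sign}(0)=+1$. Cost $c(x,x')=\|x-x'\|_2$. Dynamics: $x_i^{(0)}=x_i$; at each round $t\ge1$ all users update concurrently; user $i$ changes her features only if she is currently classified $-1$ and some $x'$ with $h(x';x^{(t-1)}_{-i})=+1$ has $c(x_i^{(t-1)},x')\le2$, in which case she moves to the minimum-cost such point (embedding exactly on the boundary $\theta^\top\phi+b=0$); otherwise she stays. User $i$ ''moves at round $t$'' if $x_i^{(t)}\neq x_i^{(t-1)}$. *)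

From HB Require Import structures.
From mathcomp Require Import all_boot all_order all_algebra.
From mathcomp Require Import reals.
Set Implicit Arguments. Unset Strict Implicit. Unset Printing Implicit Defensive.
Import Order.TTheory GRing.Theory Num.Theory.
Local Open Scope ring_scope.

Definition vec (R : realType) (l : nat) := 'rV[R]_l.

Definition dot (R : realType) (l : nat) (u v : vec R l) : R :=
  \sum_(k < l) u ord0 k * v ord0 k.

Definition norm2 (R : realType) (l : nat) (u : vec R l) : R := Num.sqrt (dot u u).
Definition cost (R : realType) (l : nat) (x x' : vec R l) : R := norm2 (x - x').

Definition profile (R : realType) (l n : nat) := 'I_n -> vec R l.

Definition replace (R : realType) (l n : nat) (x : profile R l n) (i : 'I_n)
  (x' : vec R l) : profile R l n := fun j => if j == i then x' else x j.

Definition phi (R : realType) (l n : nat) (x : profile R l n) (i : 'I_n) : vec R l :=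
  (n%:R)^-1 *: \sum_(j < n) x j.

(* sign with sign(0) = +1 *)
Definition sgn (R : realType) (r : R) : int := if 0 <= r then 1%R else (-1)%R.

Definition h (R : realType) (l n : nat) (theta : vec R l) (b : R)
  (x : profile R l n) (i : 'I_n) : int := sgn (dot theta (phi x i) + b).

Definition can_move (R : realType) (l n : nat) (theta : vec R l) (b : R)
  (x : profile R l n) (i : 'I_n) : Prop :=
  h theta b x i = (-1)%R /\
  exists x' : vec R l, h theta b (replace x i x') i = 1%R /\ cost (x i) x' <= 2.

Definition min_cost_move (R : realType) (l n : nat) (theta : vec R l) (b : R)
  (x : profile R l n) (i : 'I_n) (x' : vec R l) : Prop :=
  h theta b (replace x i x') i = 1%R /\ cost (x i) x' <= 2 /\
  forall z : vec R l, h theta b (replace x i z) i = 1%R -> cost (x i) z <= 2 ->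
    cost (x i) x' <= cost (x i) z.

Definition br_step (R : realType) (l n : nat) (theta : vec R l) (b : R)
  (x y : profile R l n) : Prop :=
  forall i : 'I_n,
    (can_move theta b x i -> min_cost_move theta b x i (y i)) /\
    (~ can_move theta b x i -> y i = x i).

From HB Require Import structures.
From mathcomp Require Import all_boot all_order all_algebra.
From mathcomp Require Import reals.
From Stdlib Require Import Classical.
Import Order.TTheory GRing.Theory Num.Theory.
Local Open Scope ring_scope.

(* With uniform clique weights every user sees the same aggregate
   (1/n) sum_j x_j, and a deviation of user i from x_i to x' shifts the sum by
   x' - x_i whoever i is.  Translating a profitable deviation of one user to
   any other user (same displacement, same cost) shows that the ability to
   move depends only on the sum of the profile.  So either every user can move
   in round 1, and each does, since her current point is classified -1 while
   her target is classified +1; or nobody can, the profile is a fixed point of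
   the dynamics, and nobody ever moves. *)

Section CliqueDynamics.

Context {R : realType} {l n : nat} {theta : vec R l} {b : R}.
Implicit Types (x y : profile R l n) (i j : 'I_n).

Local Notation total x := (\sum_(k < n) x k).

Lemma sum_replace x i (w : vec R l) :
  total (replace x i w) = total x + (w - x i).
Proof.
rewrite (bigD1 i) //= (bigD1 i (P := predT)) //= /replace eqxx.
rewrite (eq_bigr x); last by move=> j /negbTE ->.
by rewrite addrC (addrC (x i)) -addrA; congr (_ + _); rewrite addrC addrNK.
Qed.

Lemma h_eq_total x y i j : total x = total y -> h theta b x i = h theta b y j.
Proof. by rewrite /h /phi => ->. Qed.

Lemma can_move_eq_total {x y i} j :
  total x = total y -> can_move theta b x i -> can_move theta b y j.
Proof.
move=> xy [x_neg [z [z_pos z_cost]]]; split.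
  by rewrite -x_neg; apply: h_eq_total.
exists (y j + (z - x i)); split.
  rewrite -z_pos; apply: h_eq_total.
  by rewrite !sum_replace xy (addrC (y j)) addrK.
by rewrite /cost opprD addrA subrr add0r opprB.
Qed.

Lemma min_cost_move_neq {x i} {y : vec R l} :
  can_move theta b x i -> min_cost_move theta b x i y -> y <> x i.
Proof.
move=> [x_neg _] [y_pos _] yx; move: y_pos; rewrite yx.
by rewrite (h_eq_total _ x i i) ?sum_replace ?subrr ?addr0 // x_neg.
Qed.

Lemma br_step_stuck {x y} :
  (forall i, ~ can_move theta b x i) -> br_step theta b x y ->
  forall i, y i = x i.
Proof. by move=> stuck step i; apply: (step i).2. Qed.

End CliqueDynamics.

Theorem proposition6 (R : realType) (l n : nat) (hn : (0 < n)%N)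
  (theta : vec R l) (b : R) (x0 : profile R l n)
  (X : nat -> profile R l n) (hX0 : X 0%N = x0)
  (hstep : forall t : nat, br_step theta b (X t) (X t.+1)) :
  (forall i : 'I_n, X 1%N i <> X 0%N i) \/
  (forall (t : nat) (i : 'I_n), X t.+1 i = X t i).
Proof.
pose i0 := Ordinal hn.
have [can0 | stuck0] := classic (can_move theta b (X 0%N) i0).
  left => i; have cani := can_move_eq_total i (erefl _) can0.
  exact: min_cost_move_neq cani ((hstep 0%N i).1 cani).
have stuck t j : \sum_(k < n) X t k = \sum_(k < n) X 0%N k ->
    ~ can_move theta b (X t) j.
  by move=> tot /(can_move_eq_total i0 tot)/stuck0.
have total_const t : \sum_(k < n) X t k = \sum_(k < n) X 0%N k.
  elim: t => // t IH; rewrite -IH; apply: eq_bigr => k _.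
  exact: br_step_stuck (stuck t ^~ IH) (hstep t) k.
by right => t; apply: br_step_stuck (stuck t ^~ (total_const t)) (hstep t).
Qed.
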